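(* The sets $\mathsf{M}^s\cap\mathsf{M}^n$ (of Epstein models) and $\mathsf{R}^s\cap\mathsf{R}^n$ (of Epstein relations) are undefinable.
   Context: Language: propositional letters $\Phi=\{p_0,p_1,\dots\}$; connectives $\neg$, $\lor,\wedge,\to,\leftrightarrow,\vartriangle,\looparrowright$; $\mathsf{FOR}$ the set of all formulas. An Epstein model is $\langle v,\mathfrak{R}\rangle$ with $v:\Phi\to\{0,1\}$ and $\mathfrak{R}\subseteq\mathsf{FOR}^2$ (an Epstein relation); truth: letters via $v$, boolean connectives classical, $\langle v,\mathfrak{R}\rangle\vDash\varphi\vartriangle\psi$ iff both true and $\langle\varphi,\psi\rangle\in\mathfrak{R}$; $\langle v,\mathfrak{R}\rangle\vDash\varphi\looparrowright\psi$ iff $\varphi\to\psi$ true and $\langle\varphi,\psi\rangle\in\mathfrak{R}$. $\mathfrak{R}\vDash\varphi$ iff true under every valuation. $\mathsf{R}^s$: symmetric relations; $\mathsf{R}^n$: relations $\mathfrak{R}$ with $\langle\neg\varphi,\psi\rangle\in\mathfrak{R}\Rightarrow\langle\varphi,\psi\rangle\in\mathfrak{R}$ for all $\varphi,\psi$; $\mathsf{M}^s$, $\mathsf{M}^n$: all models $\langle v,\mathfrak{R}\rangle$ with $\mathfrak{R}\in\mathsf{R}^s$, resp. $\mathfrak{R}\in\mathsf{R}^n$. A set $\mathsf{K}$ of relations (resp. models) is definable iff there is $\Gamma\subseteq\mathsf{FOR}$ such that for every relation $\mathfrak{R}$ (resp. model $\mathfrak{M}$): $\Gamma$ is valid on $\mathfrak{R}$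 (resp. true in $\mathfrak{M}$) iff it belongs to $\mathsf{K}$. *)

Inductive form : Type :=
| Var : nat -> form
| Neg : form -> form
| Or : form -> form -> form
| And : form -> form -> form
| Imp : form -> form -> form
| Iff : form -> form -> form
| Tri : form -> form -> form
| Loop : form -> form -> form.

Definition valuation := nat -> bool.
Definition erel := form -> form -> Prop.

Fixpoint sat (v : valuation) (R : erel) (f : form) : Prop :=
  match f with
  | Var n => v n = true
  | Neg a => ~ sat v R a
  | Or a b => sat v R a \/ sat v R b
  | And a b => sat v R a /\ sat v R b
  | Imp a b => sat v R a -> sat v R b
  | Iff a b => (sat v R a <-> sat v R b)
  | Tri a b => (sat v R a /\ sat v R b) /\ R a b
  | Loop a b => (sat v R a -> sat v R b) /\ R a b
  end.

Definition valid (R : erel) (f : form) : Prop := forall v, sat v R f.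

Definition sym_rel (R : erel) : Prop := forall a b, R a b -> R b a.

Definition neg_rel (R : erel) : Prop := forall a b, R (Neg a) b -> R a b.

Definition definable_rel (K : erel -> Prop) : Prop :=
  exists Gamma : form -> Prop,
    forall R : erel, (forall f, Gamma f -> valid R f) <-> K R.

Definition definable_model (K : valuation -> erel -> Prop) : Prop :=
  exists Gamma : form -> Prop,
    forall (v : valuation) (R : erel), (forall f, Gamma f -> sat v R f) <-> K v R.

(* Truth in an Epstein model only consults pairs <a, b> of the relation for which
   a -> b is true.  Hence deleting from the full relation the single pair
   <p0 -> p0, ~(p0 -> p0)>, whose first member is a tautology and whose second
   is a contradiction, changes the truth value of no formula under any valuation.
   The full relation is symmetric and in R^n, the reduced one is not symmetric,
   so no set of formulas separates them. *)

From Stdlib Require Import PeanoNat.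

Lemma form_eq_dec (a b : form) : {a = b} + {a <> b}.
Proof. decide equality; apply Nat.eq_dec. Qed.

Lemma sat_sub_rel (R R' : erel) :
  (forall a b, R' a b -> R a b) ->
  (forall a b, R a b -> R' a b \/ forall v, sat v R a /\ ~ sat v R b) ->
  forall v f, sat v R f <-> sat v R' f.
Proof.
  intros sub_R'R R_R' v f.
  induction f as [n|a IH|a IHa b IHb|a IHa b IHb|a IHa b IHb|a IHa b IHb
                 |a IHa b IHb|a IHa b IHb]; simpl; try tauto.
  - split; [intros [[Ha Hb] Rab] | intros [[Ha Hb] R'ab]].
    + destruct (R_R' a b Rab) as [R'ab | refuted]; [tauto|].
      exfalso; apply (proj2 (refuted v)); exact Hb.
    + split; [tauto | exact (sub_R'R a b R'ab)].
  - split; [intros [Hab Rab] | intros [Hab R'ab]].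
    + destruct (R_R' a b Rab) as [R'ab | refuted]; [tauto|].
      exfalso; destruct (refuted v) as [Ha Hb]; exact (Hb (Hab Ha)).
    + split; [tauto | exact (sub_R'R a b R'ab)].
Qed.

Lemma not_definable_model_of_sat_iff (K : valuation -> erel -> Prop)
    (v : valuation) (R R' : erel) :
  (forall f, sat v R f <-> sat v R' f) -> K v R -> ~ K v R' ->
  ~ definable_model K.
Proof.
  intros sat_iff KR notKR' [Gamma defK].
  apply notKR', defK; intros f Gf.
  apply sat_iff, (proj2 (defK v R) KR f Gf).
Qed.

Lemma not_definable_rel_of_sat_iff (K : erel -> Prop) (R R' : erel) :
  (forall v f, sat v R f <-> sat v R' f) -> K R -> ~ K R' ->
  ~ definable_rel K.
Proof.
  intros sat_iff KR notKR' [Gamma defK].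
  apply notKR', defK; intros f Gf v.
  apply sat_iff, (proj2 (defK R) KR f Gf).
Qed.

Definition taut : form := Imp (Var 0) (Var 0).

Definition full_rel : erel := fun _ _ => True.

Definition full_rel_but_taut_neg : erel := fun a b => ~ (a = taut /\ b = Neg taut).

Lemma sat_full_rel_but_taut_neg v f :
  sat v full_rel f <-> sat v full_rel_but_taut_neg f.
Proof.
  apply sat_sub_rel; [intros; exact I|].
  intros a b _.
  destruct (form_eq_dec a taut) as [-> | a_neq].
  - destruct (form_eq_dec b (Neg taut)) as [-> | b_neq].
    + right; intros w; simpl; tauto.
    + left; intros [_ b_eq]; exact (b_neq b_eq).
  - left; intros [a_eq _]; exact (a_neq a_eq).
Qed.

Lemma full_rel_sym_neg : sym_rel full_rel /\ neg_rel full_rel.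
Proof. split; intros a b _; exact I. Qed.

Lemma full_rel_but_taut_neg_not_sym : ~ sym_rel full_rel_but_taut_neg.
Proof.
  intros sym; apply (sym (Neg taut) taut).
  - intros [neg_eq _]; discriminate.
  - split; reflexivity.
Qed.

Theorem mainTheorem13 :
  ~ definable_model (fun (_ : valuation) (R : erel) => sym_rel R /\ neg_rel R) /\
  ~ definable_rel (fun R : erel => sym_rel R /\ neg_rel R).
Proof.
  split.
  - apply (not_definable_model_of_sat_iff _ (fun _ => true) full_rel full_rel_but_taut_neg).
    + apply sat_full_rel_but_taut_neg.
    + exact full_rel_sym_neg.
    + intros [sym _]; exact (full_rel_but_taut_neg_not_sym sym).
  - apply (not_definable_rel_of_sat_iff _ full_rel full_rel_but_taut_neg).
    + apply sat_full_rel_but_taut_neg.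
    + exact full_rel_sym_neg.
    + intros [sym _]; exact (full_rel_but_taut_neg_not_sym sym).
Qed.
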